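(* For every integer $n\ge 1$, $(n-1) P_{n-1}^3=(2 P_{n}^2+(n-1) P_{2 n-1}) P_{n-1}+(n+1) P_{n} (P_{n} P_{n+1}-P_{2 n})$, where $P_k$ denotes the $k$-th Pell number.
   Context: The Pell numbers are defined by $P_0=0$, $P_1=1$, $P_k=2P_{k-1}+P_{k-2}$ for $k\ge 2$. *)

(* Pell numbers as integers (the identity involves subtraction). *)
From mathcomp Require Import all_boot all_order all_algebra.
Set Implicit Arguments. Unset Strict Implicit. Unset Printing Implicit Defensive.
Import GRing.Theory Num.Theory.
Local Open Scope ring_scope.

Fixpoint pell (k : nat) : int :=
  match k with
  | 0%N => 0
  | 1%N => 1
  | (k'.+1 as k1).+1 => 2 * pell k1 + pell k'
  end.

(** With [a = P_(n-1)] and [b = P_n], the addition formula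
    [P_(m+k+1) = P_(m+1) P_(k+1) + P_m P_k] gives [P_(2n-1) = a^2 + b^2] and
    [P_(2n) = 2b(a + b)], hence [P_n P_(n+1) - P_(2n) = -ab]; after these
    substitutions the identity is a polynomial identity in [a], [b] and [n]. *)
From mathcomp Require Import all_boot all_order all_algebra.
From mathcomp Require Import ring zify.
Import GRing.Theory Num.Theory.
Local Open Scope ring_scope.

Lemma pellSS k : pell k.+2 = 2 * pell k.+1 + pell k.
Proof. by []. Qed.

Lemma pell_addS m k : pell (m + k).+1 = pell m.+1 * pell k.+1 + pell m * pell k.
Proof.
elim: k m => [|k IHk] m; first by rewrite addn0 mulr1 mulr0 addr0.
rewrite addnS -addSn IHk !pellSS; ring.
Qed.

Lemma pell_double_pred k : pell (2 * k.+1).-1 = pell k.+1 ^+ 2 + pell k ^+ 2.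
Proof.
have -> : ((2 * k.+1).-1 = (k + k).+1)%N by lia.
by rewrite pell_addS.
Qed.

Lemma pell_double k : pell (2 * k.+1) = 2 * pell k.+1 * (pell k.+1 + pell k).
Proof.
have -> : (2 * k.+1 = (k + k.+1).+1)%N by lia.
rewrite pell_addS pellSS; ring.
Qed.

Lemma pell_mulS_sub_double k :
  pell k.+1 * pell k.+2 - pell (2 * k.+1) = - (pell k * pell k.+1).
Proof. rewrite pell_double pellSS; ring. Qed.

Theorem proposition7p5 (n : nat) (hn : (1 <= n)%N) :
  (n.-1)%:R * pell n.-1 ^+ 3 =
  (2 * pell n ^+ 2 + (n.-1)%:R * pell (2 * n).-1) * pell n.-1
  + (n.+1)%:R * pell n * (pell n * pell n.+1 - pell (2 * n)) :> int.
Proof.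
case: n hn => [//|m] _; rewrite [m.+1.-1]/=.
rewrite pell_double_pred pell_mulS_sub_double.
ring.
Qed.
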